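(* Let $q\ge2$, let $(\varepsilon_t)_{t\in\mathbb Z}$ be i.i.d. with a continuous distribution, and $X_t=\sum_{l=0}^q\varepsilon_{t-l}$. For OPs of length $m=3$: (i) for every $2\le k\le q-1$ and all $i,j$, $p_{ij}(k)=p_ip_j$; (ii) $p_{ij}(k)=p_ip_j$ for $k\ge q+3$; (iii) the probabilities $p_{ij}(1)$, $p_{ij}(q)$, $p_{ij}(q+1)$, $p_{ij}(q+2)$ do not depend on $q$ (for fixed innovation distribution). Consequently, the long-run covariance matrix $\Sigma$ is the same for all $q\ge2$.
   Context: $\Pi_t$ is the OP of $(X_t,X_{t+1},X_{t+2})$, i.e. the permutation $\pi\in S_3$ with $\pi^{(j)}<\pi^{(k)}\iff X_{t+j-1}<X_{t+k-1}$; OPs in lexicographic order are $\pi_1=(1,2,3)$, $\pi_2=(1,3,2)$, $\pi_3=(2,1,3)$, $\pi_4=(2,3,1)$, $\pi_5=(3,1,2)$, $\pi_6=(3,2,1)$. $p_i=\mathbb P(\Pi_0=\pi_i)$, $p_{ij}(k)=\mathbb P(\Pi_0=\pi_i,\Pi_k=\pi_j)$, and $\Sigma=(\sigma_{ij})$ with $\sigma_{ij}=p_i(\delta_{ij}-p_j)+\sum_{k=1}^\infty(p_{ij}(k)+p_{ji}(k)-2p_ip_j)$. *)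

From HB Require Import structures.
From mathcomp Require Import all_boot all_order all_algebra.
From mathcomp Require Import all_classical all_reals all_analysis.
Set Implicit Arguments. Unset Strict Implicit. Unset Printing Implicit Defensive.
Import Order.TTheory GRing.Theory Num.Theory.
Local Open Scope classical_set_scope.
Local Open Scope ring_scope.

Section defs.
Context (d : measure_display) (T : measurableType d) (R : realType).

Definition iid_family (P : probability T R) (eps : int -> T -> R) : Prop :=
  [/\ (forall t, measurable_fun setT (eps t)),
      (forall (s : seq int) (B : int -> set R), uniq s ->
         (forall t, measurable (B t)) ->
         P (\bigcap_(t in [set` s]) (eps t @^-1` B t)) =
         (\prod_(t <- s) fine (P (eps t @^-1` B t)))%:E) &
      (forall t (B : set R), measurable B ->
         P (eps t @^-1` B) = P (eps 0 @^-1` B))].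

Definition continuous_distribution (P : probability T R) (Y : T -> R) : Prop :=
  forall x : R, P (Y @^-1` [set x]) = 0%E.

Definition MA (q : nat) (eps : int -> T -> R) (t : int) (w : T) : R :=
  \sum_(l < q.+1) eps (t - (l : nat)%:Z) w.

(* the six ordinal patterns of length 3 in lexicographic order:
   op_tab i = (pi^(1), pi^(2), pi^(3)) for pi_{i+1} *)
Definition op_tab (i : 'I_6) (j : 'I_3) : nat :=
  nth 0%N (nth [::] [:: [:: 1; 2; 3]; [:: 1; 3; 2]; [:: 2; 1; 3];
                        [:: 2; 3; 1]; [:: 3; 1; 2]; [:: 3; 2; 1]]%N i) j.

Definition op_event (X : int -> T -> R) (t : int) (i : 'I_6) : set T :=
  [set w | forall j k : 'I_3,
     (op_tab i j < op_tab i k)%N <-> X (t + (j : nat)%:Z) w < X (t + (k : nat)%:Z) w].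

Definition p_op (P : probability T R) (X : int -> T -> R) (i : 'I_6) : R :=
  fine (P (op_event X 0 i)).

Definition p2_op (P : probability T R) (X : int -> T -> R) (k : nat)
  (i j : 'I_6) : R :=
  fine (P (op_event X 0 i `&` op_event X (k%:Z) j)).

Definition Sigma_op (P : probability T R) (X : int -> T -> R) (i j : 'I_6) : R :=
  p_op P X i * ((i == j)%:R - p_op P X j) +
  limn (fun n : nat => \sum_(1 <= k < n)
     (p2_op P X k i j + p2_op P X k j i - 2 * p_op P X i * p_op P X j)).

End defs.

From HB Require Import structures.
From mathcomp Require Import all_boot all_order all_algebra.
From mathcomp Require Import all_classical all_reals all_analysis.
From mathcomp Require Import zify ring.
Import Order.TTheory GRing.Theory Num.Theory.
Local Open Scope classical_set_scope.
Local Open Scope ring_scope.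
Set Implicit Arguments. Unset Strict Implicit. Unset Printing Implicit Defensive.

(* X_{t+1} - X_t = eps_{t+1} - eps_{t-q}, so the pattern Pi_t is a fixed
   function of the four innovations eps_{t+1}, eps_{t+2}, eps_{t-q},
   eps_{t+1-q}, and {Pi_0 = pi_i, Pi_k = pi_j} is the preimage of a fixed Borel
   set under the vector of the distinct innovations involved. By a pi-lambda
   argument on boxes, the law of a vector of distinct i.i.d. innovations only
   depends on its length, and vectors over disjoint time sets are independent.
   For 2 <= k <= q-1 and k >= q+3 the time sets of Pi_0 and Pi_k are disjoint;
   for k in {1, q, q+1, q+2} they overlap in a pattern that does not depend on
   q. Then Sigma only involves these four lags. *)

(* An alias, since [nat -> R] carries no canonical pointed structure, which
   [g_sigma_algebraType] needs. *)
Definition seqR (R : realType) := nat -> R.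
HB.instance Definition _ (R : realType) := gen_eqMixin (seqR R).
HB.instance Definition _ (R : realType) := gen_choiceMixin (seqR R).
HB.instance Definition _ (R : realType) := isPointed.Build (seqR R) (fun=> 0).

Section box_sigma_algebra.
Context (R : realType).

Definition box (n : nat) (B : nat -> set R) : set (seqR R) :=
  [set x : seqR R | forall i, (i < n)%N -> B i (x i)].

Definition boxes (n : nat) : set (set (seqR R)) :=
  [set X | exists2 B : nat -> set R, (forall i, measurable (B i)) & X = box n B].

Lemma boxes_setI_closed n : setI_closed (boxes n).
Proof.
move=> _ _ [B1 mB1 ->] [B2 mB2 ->].
exists (fun i => B1 i `&` B2 i); first by move=> i; exact: measurableI.
apply/seteqP; split => x /=.
  by move=> [h1 h2] i ni; split; [exact: h1|exact: h2].
by move=> h; split => i ni; case: (h i ni).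
Qed.

Lemma boxes_setT n : boxes n setT.
Proof. by exists (fun=> setT) => //; apply/seteqP; split. Qed.

Lemma measurable_coord n a : (a < n)%N ->
  measurable_fun [set: g_sigma_algebraType (boxes n)] (fun x : seqR R => x a).
Proof.
move=> an _ B mB; rewrite setTI; apply: sub_sigma_algebra.
exists (fun i => if i == a then B else setT) => [i|]; first by case: ifP.
apply/seteqP; split => x /=; first by move=> Bx i _; case: eqP => // ->.
by move=> /(_ a an); rewrite eqxx.
Qed.

End box_sigma_algebra.

Section law_on_generated_sigma_algebra.
Context d (T : measurableType d) (R : realType) (P : probability T R).
Context (U : pointedType) (G : set (set U)).
Hypotheses (setIG : setI_closed G) (GT : G setT).
Local Notation V := (g_sigma_algebraType G).

Lemma measurable_fun_generated (f : T -> V) :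
  (forall X, G X -> measurable (f @^-1` X)) -> measurable_fun setT f.
Proof.
move=> mfG; apply: (@measurability _ _ T V setT f G) => // _ [X GX <-].
by rewrite setTI; exact: mfG.
Qed.

(* Both sides are finite measures in [X]; they agree on the pi-system [G]. *)
Lemma generated_restr_law_unique (f g : T -> V) (K : set T) :
  measurable K -> measurable_fun setT f -> measurable_fun setT g ->
  (forall X, G X -> P (f @^-1` X `&` K) = (P (g @^-1` X) * P K)%E) ->
  forall X : set V, measurable X ->
  P (f @^-1` X `&` K) = (P (g @^-1` X) * P K)%E.
Proof.
move=> mK mf mg fgG X mX.
pose r : {nonneg R} := NngNum (fine_ge0 (measure_ge0 P K)).
have PKE : P K = (r%:num)%:E by rewrite /= fineK // fin_num_measure.
have cover : \bigcup_(k : nat) setT = [set: V] by rewrite bigcup_const.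
have := @measure_unique _ _ V G (fun=> setT) erefl setIG (fun=> GT) cover
  (pushforward (mrestr P mK) f) (mscale r (pushforward P g)).
move=> /(_ mf mg) m12; rewrite muleC PKE.
apply: (m12 _ _ X mX) => [A GA|_] /=; rewrite /pushforward /mrestr /mscale.
  by rewrite -PKE muleC fgG.
by rewrite preimage_setT setTI (le_lt_trans (probability_le1 _ mK)) ?ltey.
Qed.

End law_on_generated_sigma_algebra.

Section iid_innovations.
Context d (T : measurableType d) (R : realType) (P : probability T R).
Context (eps : int -> T -> R) (iid : iid_family P eps).

(* The innovations at the times listed in [s]; beyond [size s] it repeats eps_0. *)
Definition innov (s : seq int) (w : T) : seqR R := fun i => eps (nth 0 s i) w.

Lemma measurable_eps_preimage t (B : set R) :
  measurable B -> measurable (eps t @^-1` B).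
Proof. by move=> mB; case: iid => m _ _; rewrite -(setTI (_ @^-1` _)); exact: m. Qed.

Lemma innov_preimage_box s n B :
  innov s @^-1` box n B =
  \bigcap_i (if (i < n)%N then eps (nth 0 s i) @^-1` B i else setT).
Proof.
apply/seteqP; split => w /=; first by move=> h i _; case: ifPn => // /h.
by move=> h i ni; have := h i I; rewrite ni.
Qed.

Lemma measurable_innov s n :
  measurable_fun [set: T] (innov s : T -> g_sigma_algebraType (boxes n)).
Proof.
apply: measurable_fun_generated => _ [B mB ->]; rewrite innov_preimage_box.
by apply: bigcapT_measurable => i; case: ifPn => _ //; exact: measurable_eps_preimage.
Qed.

Lemma measurable_innov_preimage s n X :
  <<s boxes n >> X -> measurable (innov s @^-1` X).
Proof. by move=> mX; rewrite -(setTI (_ @^-1` _)); exact: (@measurable_innov s n). Qed.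

Lemma innov_preimage_box_uniq s B : uniq s ->
  innov s @^-1` box (size s) B = \bigcap_(t in [set` s]) eps t @^-1` B (index t s).
Proof.
move=> us; apply/seteqP; split => w /=.
  by move=> h t ts; have := h (index t s); rewrite index_mem ts /innov nth_index //; apply.
by move=> h i ni; have := h (nth 0 s i) (mem_nth 0 ni); rewrite index_uniq.
Qed.

Lemma P_bigcap_eps (s : seq int) (C : int -> set R) : uniq s ->
  (forall t, measurable (C t)) ->
  P (\bigcap_(t in [set` s]) eps t @^-1` C t) =
  (\prod_(t <- s) fine (P (eps 0 @^-1` C t)))%:E.
Proof.
case: iid => _ indep ident us mC; rewrite indep //; congr (_%:E).
by apply: eq_bigr => t _; rewrite ident.
Qed.

Lemma P_innov_box s B : uniq s -> (forall i, measurable (B i)) ->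
  P (innov s @^-1` box (size s) B) =
  (\prod_(i < size s) fine (P (eps 0 @^-1` B i)))%:E.
Proof.
move=> us mB; rewrite innov_preimage_box_uniq // P_bigcap_eps //; congr (_%:E).
by rewrite (big_nth 0) big_mkord; apply: eq_bigr => i _; rewrite index_uniq.
Qed.

Lemma innov_law_eq s1 s2 : uniq s1 -> uniq s2 -> size s1 = size s2 ->
  forall X, <<s boxes (size s1) >> X ->
  P (innov s1 @^-1` X) = P (innov s2 @^-1` X).
Proof.
move=> us1 us2 s12 X mX.
have := generated_restr_law_unique (P := P) (@boxes_setI_closed R _) (@boxes_setT R _)
  measurableT (@measurable_innov s1 (size s1)) (@measurable_innov s2 (size s1)).
rewrite probability_setT => /(_ _ X mX); rewrite !setIT !mule1; apply=> _ [B mB ->].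
by rewrite setIT mule1 (P_innov_box us1 mB) s12 (P_innov_box us2 mB).
Qed.

Lemma innov_box_indep s1 s2 B1 B2 : uniq (s1 ++ s2) ->
  (forall i, measurable (B1 i)) -> (forall i, measurable (B2 i)) ->
  P (innov s1 @^-1` box (size s1) B1 `&` innov s2 @^-1` box (size s2) B2) =
  (P (innov s1 @^-1` box (size s1) B1) * P (innov s2 @^-1` box (size s2) B2))%E.
Proof.
move=> u12 mB1 mB2; have := u12; rewrite cat_uniq => /and3P[us1 s12 us2].
pose C t := if t \in s1 then B1 (index t s1) else B2 (index t s2).
have e1 : innov s1 @^-1` box (size s1) B1 = \bigcap_(t in [set` s1]) eps t @^-1` C t.
  rewrite innov_preimage_box_uniq //.
  by apply: eq_bigcapr => t /= ts; rewrite /C ts.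
have e2 : innov s2 @^-1` box (size s2) B2 = \bigcap_(t in [set` s2]) eps t @^-1` C t.
  rewrite innov_preimage_box_uniq //; apply: eq_bigcapr => t /= ts.
  by rewrite /C ifF //; apply/negbTE; apply: contra s12 => t1; apply/hasP; exists t.
have mC t : measurable (C t) by rewrite /C; case: ifP.
have cat12 : [set` s1] `|` [set` s2] = [set` s1 ++ s2].
  apply/seteqP; split => t /=; rewrite mem_cat; first by case=> ->; rewrite ?orbT.
  by case/orP; [left|right].
by rewrite e1 e2 -bigcap_setU cat12 !P_bigcap_eps // big_cat -EFinM.
Qed.

Lemma innov_indep s1 s2 X1 X2 : uniq (s1 ++ s2) ->
  <<s boxes (size s1) >> X1 -> <<s boxes (size s2) >> X2 ->
  P (innov s1 @^-1` X1 `&` innov s2 @^-1` X2) =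
  (P (innov s1 @^-1` X1) * P (innov s2 @^-1` X2))%E.
Proof.
move=> u12 mX1 mX2.
have mK1 := measurable_innov_preimage s1 mX1.
have box2 B2 : (forall i, measurable (B2 i)) ->
    P (innov s1 @^-1` X1 `&` innov s2 @^-1` box (size s2) B2) =
    (P (innov s1 @^-1` X1) * P (innov s2 @^-1` box (size s2) B2))%E.
  move=> mB2; have mK2 : measurable (innov s2 @^-1` box (size s2) B2).
    by apply: measurable_innov_preimage; apply: sub_sigma_algebra; exists B2.
  have := generated_restr_law_unique (P := P) (@boxes_setI_closed R _)
    (@boxes_setT R _) mK2 (@measurable_innov s1 (size s1)) (@measurable_innov s1 (size s1)).
  by apply=> // _ [B1 mB1 ->]; rewrite innov_box_indep.
have := generated_restr_law_unique (P := P) (@boxes_setI_closed R _)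
  (@boxes_setT R _) mK1 (@measurable_innov s2 (size s2)) (@measurable_innov s2 (size s2)).
by rewrite setIC muleC; apply=> // _ [B2 mB2 ->]; rewrite setIC box2 // muleC.
Qed.

End iid_innovations.

Section ordinal_patterns_of_MA.
Context (R : realType).

(* If positions [a], [b], [c], [e] of [x] hold eps_{t+1}, eps_{t+2}, eps_{t-q}
   and eps_{t+1-q}, then [MA_incr a b c e x j] is X_{t+j} - X_t. *)
Definition MA_incr (a b c e : nat) (x : seqR R) (j : 'I_3) : R :=
  match nat_of_ord j with
  | 0 => 0 | 1 => x a - x c | _ => x a - x c + (x b - x e) end.

Definition pattern_set (i : 'I_6) (a b c e : nat) : set (seqR R) :=
  [set x | forall j k : 'I_3,
     (op_tab i j < op_tab i k)%N <-> MA_incr a b c e x j < MA_incr a b c e x k].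

Lemma measurable_MA_incr n a b c e j :
  (a < n)%N -> (b < n)%N -> (c < n)%N -> (e < n)%N ->
  measurable_fun [set: g_sigma_algebraType (boxes n)]
    (fun x : seqR R => MA_incr a b c e x j).
Proof.
move=> an bn cn en; rewrite /MA_incr; case: j => -[|[|j]] _ /=.
- exact: measurable_cst.
- by apply: measurable_realfun.measurable_funB; exact: measurable_coord.
- apply: measurable_realfun.measurable_funD;
    by apply: measurable_realfun.measurable_funB; exact: measurable_coord.
Qed.

Lemma measurable_pattern_set n i a b c e :
  (a < n)%N -> (b < n)%N -> (c < n)%N -> (e < n)%N ->
  <<s boxes n >> (pattern_set i a b c e).
Proof.
move=> an bn cn en; pose Y j x := MA_incr a b c e x j.
pose L j k : set (g_sigma_algebraType (boxes n)) := [set x | Y j x < Y k x].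
have mL j k : measurable (L j k).
  have -> : L j k = setT `&` (fun x => Y k x - Y j x) @^-1` `]0, +oo[%classic.
    by apply/seteqP; split => x /=; rewrite in_itv /= andbT subr_gt0 // => -[].
  by apply: measurable_realfun.measurable_funB => //; exact: measurable_MA_incr.
pose S j k := if (op_tab i j < op_tab i k)%N then L j k else ~` L j k.
have -> : pattern_set i a b c e = \bigcap_(j in setT) \bigcap_(k in setT) S j k.
  apply/seteqP; split => x /=.
    move=> h j _ k _; rewrite /S; have := h j k.
    by case: ifP => _ [h1 h2]; [apply: h1|move=> /h2].
  move=> h j k; have := h j I k I; rewrite /S.
  by case: ifP => _ hjk; split => // ?; exfalso; exact: hjk.
apply: (@fin_bigcap_measurable _ (g_sigma_algebraType (boxes n))) => [|j _].
  exact: finite_finset.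
apply: fin_bigcap_measurable => [|k _]; first exact: finite_finset.
by rewrite /S; case: ifP => _ //; exact: measurableC.
Qed.

Context d (T : measurableType d) (eps : int -> T -> R).

Lemma MA_succ q t w :
  MA q eps (t + 1) w = MA q eps t w + eps (t + 1) w - eps (t - q%:Z) w.
Proof.
rewrite /MA big_ord_recl [in RHS]big_ord_recr /= subr0.
have -> : \sum_(l < q) eps (t + 1 - (bump 0 l : nat)%:Z) w = \sum_(l < q) eps (t - l%:Z) w.
  by apply: eq_bigr => l _; congr (eps _ w); rewrite /bump /=; lia.
by rewrite [in RHS]addrAC addrK addrC.
Qed.

Lemma MA_shift q t s a b c e w :
  nth 0 s a = t + 1 -> nth 0 s b = t + 2 -> nth 0 s c = t - q%:Z ->
  nth 0 s e = t + 1 - q%:Z ->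
  forall j : 'I_3, MA q eps (t + (j : nat)%:Z) w =
    MA q eps t w + MA_incr a b c e (innov eps s w) j.
Proof.
move=> sa sb sc se [[|[|[|//]]] ?]; rewrite /MA_incr /innov /=.
- by rewrite !addr0.
- by rewrite MA_succ sa sc addrA.
- have t2 : t + 2%:Z = t + 1 + 1 by rewrite -addrA.
  by rewrite t2 !MA_succ sa sb sc se -t2; ring.
Qed.

Lemma op_event_MA q t s a b c e i :
  nth 0 s a = t + 1 -> nth 0 s b = t + 2 -> nth 0 s c = t - q%:Z ->
  nth 0 s e = t + 1 - q%:Z ->
  op_event (MA q eps) t i = innov eps s @^-1` pattern_set i a b c e.
Proof.
move=> sa sb sc se; apply/seteqP; split => w /= h j k; have := h j k;
  by rewrite !(MA_shift _ sa sb sc se) ltrD2l.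
Qed.

End ordinal_patterns_of_MA.

Section ordinal_pattern_probabilities.
Context d (T : measurableType d) (R : realType) (P : probability T R).
Context (eps : int -> T -> R) (iid : iid_family P eps).

Definition pattern_innov (q : nat) (t : int) : seq int :=
  [:: t + 1; t + 2; t - q%:Z; t + 1 - q%:Z].

Lemma op_event_pattern_innov q t i :
  op_event (MA q eps) t i = innov eps (pattern_innov q t) @^-1` pattern_set i 0 1 2 3.
Proof. exact: op_event_MA. Qed.

Lemma uniq_pattern_innov q t : (0 < q)%N -> uniq (pattern_innov q t).
Proof. by move=> q0; rewrite /pattern_innov /= !inE; lia. Qed.

(* Any four distinct times would do. *)
Definition pattern_prob (i : 'I_6) : R :=
  fine (P (innov eps [:: 1; 2; 3; 4] @^-1` pattern_set i 0 1 2 3)).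

Lemma P_op_event_MA q t i : (0 < q)%N ->
  P (op_event (MA q eps) t i) = (pattern_prob i)%:E.
Proof.
move=> q0; have mE : <<s boxes 4 >> (pattern_set i 0 1 2 3 : set (seqR R)).
  exact: measurable_pattern_set.
rewrite op_event_pattern_innov (innov_law_eq iid _ (s2 := [:: 1; 2; 3; 4])) //.
- rewrite /pattern_prob fineK // fin_num_measure //.
  exact: measurable_innov_preimage iid _ _ _ mE.
- exact: uniq_pattern_innov.
Qed.

Lemma p_op_MA q i : (0 < q)%N -> p_op P (MA q eps) i = pattern_prob i.
Proof. by move=> q0; rewrite /p_op P_op_event_MA. Qed.

Lemma p2_op_MA_indep q k i j : (0 < q)%N ->
  uniq (pattern_innov q 0 ++ pattern_innov q k%:Z) ->
  p2_op P (MA q eps) k i j = p_op P (MA q eps) i * p_op P (MA q eps) j.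
Proof.
move=> q0 u; rewrite /p2_op /p_op !op_event_pattern_innov (innov_indep iid) //;
  try exact: measurable_pattern_set.
by rewrite -!op_event_pattern_innov !P_op_event_MA.
Qed.

Lemma p2_op_MA_innov q (k : nat) u a b c e a' b' c' e' i j :
  nth 0 u a = 1 -> nth 0 u b = 2 -> nth 0 u c = - q%:Z -> nth 0 u e = 1 - q%:Z ->
  nth 0 u a' = k%:Z + 1 -> nth 0 u b' = k%:Z + 2 -> nth 0 u c' = k%:Z - q%:Z ->
  nth 0 u e' = k%:Z + 1 - q%:Z ->
  p2_op P (MA q eps) k i j =
  fine (P (innov eps u @^-1` (pattern_set i a b c e `&` pattern_set j a' b' c' e'))).
Proof.
move=> ua ub uc ue ua' ub' uc' ue'; rewrite /p2_op (op_event_MA _ _ ua' ub' uc' ue').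
by rewrite (@op_event_MA _ _ _ eps q 0 u a b c e) ?add0r ?sub0r.
Qed.

Lemma pattern_pair_law_eq n u u' i j a b c e a' b' c' e' :
  uniq u -> uniq u' -> size u = n -> size u' = n ->
  all (fun x => x < n)%N [:: a; b; c; e; a'; b'; c'; e'] ->
  P (innov eps u @^-1` (pattern_set i a b c e `&` pattern_set j a' b' c' e')) =
  P (innov eps u' @^-1` (pattern_set i a b c e `&` pattern_set j a' b' c' e')).
Proof.
move=> uu uu' <- su' /allP pos; apply: (innov_law_eq iid) => //.
apply: (@measurableI _ (g_sigma_algebraType (boxes _)));
  by apply: measurable_pattern_set; apply: pos; rewrite !inE eqxx ?orbT.
Qed.

Lemma p2_op_MA_short_lag q : (2 <= q)%N -> forall k i j, (2 <= k <= q.-1)%N ->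
  p2_op P (MA q eps) k i j = p_op P (MA q eps) i * p_op P (MA q eps) j.
Proof.
move=> q2 k i j /andP[k2 kq]; apply: p2_op_MA_indep; first lia.
by rewrite /pattern_innov /= !inE; lia.
Qed.

Lemma p2_op_MA_long_lag q : (2 <= q)%N -> forall k i j, (q + 3 <= k)%N ->
  p2_op P (MA q eps) k i j = p_op P (MA q eps) i * p_op P (MA q eps) j.
Proof.
move=> q2 k i j kq; apply: p2_op_MA_indep; first lia.
by rewrite /pattern_innov /= !inE; lia.
Qed.

(* Each list enumerates without repetition the innovations driving Pi_0 and
   Pi_k; for these four lags the overlaps sit at positions independent of q. *)
Lemma p2_op_MA_lag1 q q' i j : (2 <= q)%N -> (2 <= q')%N ->
  p2_op P (MA q eps) 1 i j = p2_op P (MA q' eps) 1 i j.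
Proof.
move=> q2 q'2; pose u (q : nat) : seq int := [:: 1; 2; 3; - q%:Z; 1 - q%:Z; 2 - q%:Z].
rewrite (@p2_op_MA_innov q 1 (u q) 0 1 3 4 1 2 4 5) /=; try lia.
rewrite (@p2_op_MA_innov q' 1 (u q') 0 1 3 4 1 2 4 5) /=; try lia.
by congr fine; apply: pattern_pair_law_eq => //; rewrite /u /= !inE; lia.
Qed.

Lemma p2_op_MA_lag_q q q' i j : (2 <= q)%N -> (2 <= q')%N ->
  p2_op P (MA q eps) q i j = p2_op P (MA q' eps) q' i j.
Proof.
move=> q2 q'2.
pose u (q : nat) : seq int := [:: 1; 2; - q%:Z; 1 - q%:Z; q%:Z + 1; q%:Z + 2; 0].
rewrite (@p2_op_MA_innov q q (u q) 0 1 2 3 4 5 6 0) /=; try lia.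
rewrite (@p2_op_MA_innov q' q' (u q') 0 1 2 3 4 5 6 0) /=; try lia.
by congr fine; apply: pattern_pair_law_eq => //; rewrite /u /= !inE; lia.
Qed.

Lemma p2_op_MA_lag_q1 q q' i j : (2 <= q)%N -> (2 <= q')%N ->
  p2_op P (MA q eps) q.+1 i j = p2_op P (MA q' eps) q'.+1 i j.
Proof.
move=> q2 q'2.
pose u (q : nat) : seq int := [:: 1; 2; - q%:Z; 1 - q%:Z; q%:Z + 2; q%:Z + 3].
rewrite (@p2_op_MA_innov q q.+1 (u q) 0 1 2 3 4 5 0 1) /=; try lia.
rewrite (@p2_op_MA_innov q' q'.+1 (u q') 0 1 2 3 4 5 0 1) /=; try lia.
by congr fine; apply: pattern_pair_law_eq => //; rewrite /u /= !inE; lia.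
Qed.

Lemma p2_op_MA_lag_q2 q q' i j : (2 <= q)%N -> (2 <= q')%N ->
  p2_op P (MA q eps) q.+2 i j = p2_op P (MA q' eps) q'.+2 i j.
Proof.
move=> q2 q'2.
pose u (q : nat) : seq int := [:: 1; 2; - q%:Z; 1 - q%:Z; q%:Z + 3; q%:Z + 4; 3].
rewrite (@p2_op_MA_innov q q.+2 (u q) 0 1 2 3 4 5 1 6) /=; try lia.
rewrite (@p2_op_MA_innov q' q'.+2 (u q') 0 1 2 3 4 5 1 6) /=; try lia.
by congr fine; apply: pattern_pair_law_eq => //; rewrite /u /= !inE; lia.
Qed.

End ordinal_pattern_probabilities.

Lemma sum_sparse (R : realType) (f : nat -> R) q n :
  (2 <= q)%N -> (q + 3 <= n)%N ->
  (forall k, (2 <= k <= q.-1)%N -> f k = 0) ->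
  (forall k, (q + 3 <= k)%N -> f k = 0) ->
  \sum_(1 <= k < n) f k = f 1%N + f q + f q.+1 + f q.+2.
Proof.
move=> q2 qn f_mid f_tail.
rewrite (big_cat_nat _ (n := q + 3)) //=; last lia.
rewrite [\sum_(q + 3 <= k < n) f k]big1_seq ?addr0 => [|k /andP[_]]; last first.
  by rewrite mem_index_iota => /andP[qk _]; exact: f_tail.
rewrite addn3 !big_nat_recr //=; try lia.
rewrite big_ltn; last lia.
rewrite [\sum_(2 <= k < q) f k]big1_seq ?addr0 // => k /andP[_].
by rewrite mem_index_iota => kq; apply: f_mid; lia.
Qed.

Lemma limn_sparse (R : realType) (f : nat -> R) q : (2 <= q)%N ->
  (forall k, (2 <= k <= q.-1)%N -> f k = 0) ->
  (forall k, (q + 3 <= k)%N -> f k = 0) ->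
  limn (fun n => \sum_(1 <= k < n) f k) = f 1%N + f q + f q.+1 + f q.+2.
Proof.
move=> q2 f_mid f_tail; apply: cvg_lim => //; apply: cvg_near_cst.
by exists (q + 3)%N => // n /= qn; exact: sum_sparse.
Qed.

Definition sigma_summand d (T : measurableType d) (R : realType)
    (P : probability T R) (X : int -> T -> R) (i j : 'I_6) (k : nat) : R :=
  p2_op P X k i j + p2_op P X k j i - 2 * p_op P X i * p_op P X j.

Lemma Sigma_op_sparse d (T : measurableType d) (R : realType)
    (P : probability T R) (X : int -> T -> R) q i j : (2 <= q)%N ->
  (forall k i j, (2 <= k <= q.-1)%N -> p2_op P X k i j = p_op P X i * p_op P X j) ->
  (forall k i j, (q + 3 <= k)%N -> p2_op P X k i j = p_op P X i * p_op P X j) ->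
  Sigma_op P X i j = p_op P X i * ((i == j)%:R - p_op P X j) +
    (sigma_summand P X i j 1 + sigma_summand P X i j q +
     sigma_summand P X i j q.+1 + sigma_summand P X i j q.+2).
Proof.
move=> q2 mid tail; rewrite /Sigma_op (@limn_sparse _ (sigma_summand P X i j) q) //.
  by move=> k kq; rewrite /sigma_summand !mid //; ring.
by move=> k kq; rewrite /sigma_summand !tail //; ring.
Qed.

Theorem mainTheorem15 (d : measure_display) (T : measurableType d)
  (R : realType) (P : probability T R) (eps : int -> T -> R) :
  iid_family P eps -> continuous_distribution P (eps 0) ->
  [/\ (* (i) *)
      (forall q : nat, (2 <= q)%N -> forall k : nat, (2 <= k <= q.-1)%N ->
         forall i j : 'I_6,
         p2_op P (MA q eps) k i j = p_op P (MA q eps) i * p_op P (MA q eps) j),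
      (* (ii) *)
      (forall q : nat, (2 <= q)%N -> forall k : nat, (q + 3 <= k)%N ->
         forall i j : 'I_6,
         p2_op P (MA q eps) k i j = p_op P (MA q eps) i * p_op P (MA q eps) j),
      (* (iii) *)
      (forall q q' : nat, (2 <= q)%N -> (2 <= q')%N -> forall i j : 'I_6,
         [/\ p2_op P (MA q eps) 1 i j = p2_op P (MA q' eps) 1 i j,
             p2_op P (MA q eps) q i j = p2_op P (MA q' eps) q' i j,
             p2_op P (MA q eps) q.+1 i j = p2_op P (MA q' eps) q'.+1 i j &
             p2_op P (MA q eps) q.+2 i j = p2_op P (MA q' eps) q'.+2 i j]) &
      (* consequence: Sigma is the same for all q >= 2 *)
      (forall q q' : nat, (2 <= q)%N -> (2 <= q')%N -> forall i j : 'I_6,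
         Sigma_op P (MA q eps) i j = Sigma_op P (MA q' eps) i j)].
Proof.
move=> iid _.
split => [q q2 k kq i j|q q2 k kq i j|q q' q2 q'2 i j|q q' q2 q'2 i j].
- exact: (p2_op_MA_short_lag iid q2).
- exact: (p2_op_MA_long_lag iid q2).
- by split; [exact: p2_op_MA_lag1|exact: p2_op_MA_lag_q|
             exact: p2_op_MA_lag_q1|exact: p2_op_MA_lag_q2].
rewrite (Sigma_op_sparse _ _ q2 (p2_op_MA_short_lag iid q2) (p2_op_MA_long_lag iid q2)).
rewrite (Sigma_op_sparse _ _ q'2 (p2_op_MA_short_lag iid q'2) (p2_op_MA_long_lag iid q'2)).
rewrite /sigma_summand !(p_op_MA iid) ?(leq_trans _ q2) ?(leq_trans _ q'2) //.
by rewrite !(p2_op_MA_lag1 iid _ _ q2 q'2) !(p2_op_MA_lag_q iid _ _ q2 q'2)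
  !(p2_op_MA_lag_q1 iid _ _ q2 q'2) !(p2_op_MA_lag_q2 iid _ _ q2 q'2).
Qed.
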